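(* Let $0<q<1$, let $k,n$ be nonnegative integers and let $x\in[0,1]$. Then $$B_{k,n}(x,q)=\sum_{i=k}^{n}\binom{i}{k}\binom{n}{i}(-1)^{i-k}q^{(1-x)(i-k)}[x]_q^{i},$$ where an empty sum (when $k>n$) is $0$.
   Context: Let $q$ be a real number with $0<q<1$. For real $x$, the $q$-number is $[x]_q=\frac{1-q^x}{1-q}$. For a nonnegative integer $k$ and $x\in[0,1]$, the modified $q$-Bernstein polynomials $B_{k,n}(x,q)$, $n=0,1,2,\dots$, are defined by the generating function $$\frac{t^k e^{[1-x]_q t}[x]_q^k}{k!}=\sum_{n=0}^\infty B_{k,n}(x,q)\frac{t^n}{n!}.$$ *)

From Stdlib Require Import Reals Factorial.
From Coquelicot Require Import Coquelicot.
Open Scope R_scope.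

Definition qnum (q x : R) : R := (1 - Rpower q x) / (1 - q).

Definition qBernstein_gf (k : nat) (x q t : R) : R :=
  t ^ k * exp (qnum q (1 - x) * t) * (qnum q x) ^ k / INR (fact k).

(* B : nat -> R is the family n |-> B_{k,n}(x,q) defined by the generating
   function:  gf(t) = sum_n B n t^n / n!  for every real t. *)
Definition is_modified_qBernstein (k : nat) (x q : R) (B : nat -> R) : Prop :=
  forall t : R, is_series (fun n => B n * t ^ n / INR (fact n)) (qBernstein_gf k x q t).

(* The generating function is an everywhere convergent power series in t,
   so its coefficients are determined by it: B_{k,n} / n! is the coefficient
   [x]^k/k! * [1-x]^(n-k)/(n-k)! of t^n.  Since q^(1-x) q^x = q, one has
   [1-x]_q = 1 - q^(1-x) [x]_q, and the binomial theorem applied to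
   (1 - q^(1-x) [x]_q)^(n-k) gives the stated sum. *)
From Stdlib Require Import Reals Lia Lra Factorial.
From Coquelicot Require Import Coquelicot.
Open Scope R_scope.

Lemma CV_radius_gt_0_of_entire (a : nat -> R) (f : R -> R) :
  (forall t, is_pseries a t (f t)) -> Rbar_lt 0 (CV_radius a).
Proof.
  intros Ha.
  assert (Hlim : is_lim_seq (fun n => a n * 1 ^ n) 0).
  { apply ex_series_lim_0. exists (f 1). apply is_pseries_R, Ha. }
  pose proof (CV_radius_ge_0 a) as Hge.
  destruct (CV_radius a) as [r| |] eqn:E; simpl in *; auto.
  destruct (Rle_lt_or_eq_dec 0 r Hge) as [Hr|<-]; auto.
  exfalso. apply (CV_disk_outside a 1); [|exact Hlim].
  rewrite E; simpl. rewrite Rabs_R1. lra.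
Qed.

Lemma entire_pseries_coef_unique (a b : nat -> R) (f : R -> R) (n : nat) :
  (forall t, is_pseries a t (f t)) -> (forall t, is_pseries b t (f t)) ->
  a n = b n.
Proof.
  intros Ha Hb.
  apply PSeries_ext_recip;
    [exact (CV_radius_gt_0_of_entire a f Ha)
    |exact (CV_radius_gt_0_of_entire b f Hb)|].
  apply filter_forall. intros t.
  rewrite (is_pseries_unique a t (f t) (Ha t)).
  exact (eq_sym (is_pseries_unique b t (f t) (Hb t))).
Qed.

Lemma is_pseries_exp_scal (c t : R) :
  is_pseries (fun n => c ^ n / INR (fact n)) t (exp (c * t)).
Proof.
  apply is_pseries_R.
  pose proof (proj1 (is_pseries_R _ _ _) (is_exp_Reals (c * t))) as He.
  eapply is_series_ext; [|exact He].
  intros n. simpl. rewrite Rpow_mult_distr. unfold Rdiv. ring.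
Qed.

Definition qBernstein_gf_coef (k : nat) (x q : R) (n : nat) : R :=
  if Compare_dec.le_lt_dec k n
  then qnum q x ^ k / INR (fact k) * (qnum q (1 - x) ^ (n - k) / INR (fact (n - k)))
  else 0.

Lemma qBernstein_gf_is_pseries (k : nat) (x q t : R) :
  is_pseries (qBernstein_gf_coef k x q) t (qBernstein_gf k x q t).
Proof.
  set (c := qnum q x ^ k / INR (fact k)).
  pose proof (is_pseries_exp_scal (qnum q (1 - x)) t) as He.
  apply (is_pseries_incr_n _ k) in He.
  apply (is_pseries_scal c) in He; [|apply Rmult_comm].
  replace (qBernstein_gf k x q t) with (scal c (scal (pow_n t k) (exp (qnum q (1 - x) * t)))).
  - eapply is_pseries_ext; [|exact He]. intros n.
    unfold PS_scal, qBernstein_gf_coef. rewrite PS_incr_n_simplify.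
    destruct (Compare_dec.le_lt_dec k n); [reflexivity|].
    apply Rmult_0_r.
  - unfold qBernstein_gf. rewrite pow_n_pow.
    unfold scal, c; simpl. unfold mult; simpl. unfold Rdiv. ring.
Qed.

Lemma is_pseries_of_modified_qBernstein (k : nat) (x q : R) (B : nat -> R) :
  is_modified_qBernstein k x q B ->
  forall t : R, is_pseries (fun n => B n / INR (fact n)) t (qBernstein_gf k x q t).
Proof.
  intros HB t. apply is_pseries_R.
  eapply is_series_ext; [|apply (HB t)].
  intros n. simpl. unfold Rdiv. ring.
Qed.

Lemma qnum_one_sub (q x : R) :
  0 < q -> q <> 1 -> qnum q (1 - x) = 1 - Rpower q (1 - x) * qnum q x.
Proof.
  intros Hq Hq1.
  assert (Hprod : Rpower q (1 - x) * Rpower q x = q).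
  { rewrite <- Rpower_plus. replace (1 - x + x) with 1 by ring.
    now apply Rpower_1. }
  unfold qnum. field_simplify; [|lra|lra].
  rewrite Hprod. field. lra.
Qed.

Lemma binomial_subset_of_subset (k m j : nat) : (j <= m)%nat ->
  Binomial.C (k + j) k * Binomial.C (k + m) (k + j) =
  Binomial.C (k + m) k * Binomial.C m j.
Proof.
  intros Hj. unfold Binomial.C.
  replace (k + j - k)%nat with j by lia.
  replace (k + m - (k + j))%nat with (m - j)%nat by lia.
  replace (k + m - k)%nat with m by lia.
  pose proof (INR_fact_neq_0 j). pose proof (INR_fact_neq_0 k).
  pose proof (INR_fact_neq_0 m). pose proof (INR_fact_neq_0 (m - j)).
  pose proof (INR_fact_neq_0 (k + j)).
  field. repeat split; assumption.
Qed.

Lemma sum_n_m_shift (a : nat -> R) (k m : nat) :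
  sum_n_m a k (k + m) = sum_n (fun j => a (k + j)%nat) m.
Proof.
  revert a; induction k as [|k IH]; intros a; simpl.
  - reflexivity.
  - rewrite <- sum_n_m_S, IH. reflexivity.
Qed.

Lemma binomial_expansion_shifted (b r : R) (k m : nat) :
  b ^ k / INR (fact k) * ((1 - r * b) ^ m / INR (fact m)) * INR (fact (k + m)) =
  sum_n_m (fun i => Binomial.C i k * Binomial.C (k + m) i * (-1) ^ (i - k)
                    * r ^ (i - k) * b ^ i) k (k + m).
Proof.
  rewrite sum_n_m_shift, sum_n_Reals.
  rewrite (sum_eq _ (fun j => Binomial.C m j * (- (r * b)) ^ j * 1 ^ (m - j)
                              * (Binomial.C (k + m) k * b ^ k))).
  - rewrite <- scal_sum, <- binomial.
    unfold Binomial.C. replace (k + m - k)%nat with m by lia.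
    pose proof (INR_fact_neq_0 k). pose proof (INR_fact_neq_0 m).
    replace (- (r * b) + 1) with (1 - r * b) by ring.
    field. split; assumption.
  - intros j Hj. replace (k + j - k)%nat with j by lia.
    rewrite binomial_subset_of_subset by exact Hj.
    replace (- (r * b)) with (-1 * r * b) by ring.
    rewrite !Rpow_mult_distr, pow1, pow_add. ring.
Qed.

Theorem theorem6 (q x : R) (k n : nat) (B : nat -> R) :
  0 < q < 1 -> 0 <= x <= 1 ->
  is_modified_qBernstein k x q B ->
  B n = sum_n_m (fun i => Binomial.C i k * Binomial.C n i * (-1) ^ (i - k)
                          * Rpower q ((1 - x) * INR (i - k)) * (qnum q x) ^ i) k n.
Proof.
  intros Hq _ HB.
  assert (Hcoef : B n / INR (fact n) = qBernstein_gf_coef k x q n).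
  { exact (entire_pseries_coef_unique (fun m => B m / INR (fact m)) _ _ n
             (is_pseries_of_modified_qBernstein k x q B HB)
             (qBernstein_gf_is_pseries k x q)). }
  replace (B n) with (qBernstein_gf_coef k x q n * INR (fact n))
    by (rewrite <- Hcoef; field; apply INR_fact_neq_0).
  unfold qBernstein_gf_coef.
  destruct (Compare_dec.le_lt_dec k n) as [Hkn|Hnk].
  - replace n with (k + (n - k))%nat at 3 4 by lia.
    rewrite qnum_one_sub, binomial_expansion_shifted by lra.
    replace (k + (n - k))%nat with n by lia.
    apply sum_n_m_ext. intros i.
    rewrite <- Rpower_mult, Rpower_pow by apply exp_pos.
    reflexivity.
  - rewrite sum_n_m_zero by exact Hnk. apply Rmult_0_l.
Qed.
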